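(* Let $G$ be a finitely generated group, $S$ a finite symmetric generating set, $\Gamma=\mathrm{Cay}(G,S)$, and $p\in(1,\infty)$. Let $f\in D^p(\Gamma)$. Suppose there exists a sequence $(\xi_n)$ of finitely supported functions $G\to\mathbb{K}$ such that: (1) $\sum_{\gamma\in G}\xi_n(\gamma)=1$ for all $n$; (2) for every $s\in S$, the functions $(\delta_s-\delta_e)*\xi_n*f$ converge point-wise to $0$ as $n\to\infty$; (3) there is $K>0$ such that for all $s\in S$ and all $n$, $\|(\delta_s-\delta_e)*\xi_n*f\|_{\ell^p(G)}<K$. Then the class $[f]$ of $f$ in $\overline{\ell^p H}^1(\Gamma)$ is $0$.
   Context: The Cayley graph $\Gamma=\mathrm{Cay}(G,S)$ has vertex set $G$ and edges $(\gamma,\gamma')$ with $s^{-1}\gamma=\gamma'$ for some $s\in S$. Functions take values in $\mathbb{K}=\mathbb{R}$ or $\mathbb{C}$. The gradient is $\nabla g(\gamma,\gamma')=g(\gamma')-g(\gamma)$; $D^p(\Gamma)=\{f:G\to\mathbb{K}:\nabla f\in\ell^p(E)\}$ with norm $\|f\|^p_{D^p}=\|\nabla f\|^p_{\ell^p(E)}+|f(e)|^p$, and $\overline{\ell^p H}^1(\Gamma)=D^p(\Gamma)/\overline{\ell^p(G)+\mathbb{K}}^{D^p}$ ($\mathbb{K}$ = constant functions). $\delta_\gamma$ is the Dirac mass at $\gamma$, and convolution is $(\xi*f)(\eta)=\sum_{\gamma\in G}\xi(\gamma)f(\gamma^{-1}\eta)$. *)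

From mathcomp Require Import all_boot all_algebra.
From mathcomp Require Import complex.
From mathcomp Require Import all_classical all_reals all_analysis.
Set Implicit Arguments. Unset Strict Implicit. Unset Printing Implicit Defensive.
Import GRing.Theory Num.Theory.
Import numFieldNormedType.Exports.
Local Open Scope classical_set_scope.
Local Open Scope ring_scope.

Record groupLaw (G : Type) := GroupLaw {
  gmul : G -> G -> G;
  ginv : G -> G;
  gone : G;
  gmulA : forall x y z, gmul x (gmul y z) = gmul (gmul x y) z;
  gmul1 : forall x, gmul gone x = x;
  gmulV : forall x, gmul (ginv x) x = gone }.

Section Group.
Variables (G : choiceType) (L : groupLaw G).

Definition symmetric_set (S : seq G) : Prop :=
  forall s, s \in S -> ginv L s \in S.

Definition generates (S : seq G) : Prop :=
  forall g : G, exists w : seq G, all (fun s => s \in S) w /\ g = foldr (gmul L) (gone L) w.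

Definition cayley_edges (S : seq G) : set (G * G) :=
  [set e | exists2 s, s \in S & gmul L (ginv L s) e.1 = e.2].
End Group.

Inductive scalar_kind := RealK | ComplexK.

Definition scal (R : realType) (k : scalar_kind) : numFieldType :=
  match k with RealK => (R : numFieldType) | ComplexK => (R[i] : numFieldType) end.

Definition sabs (R : realType) (k : scalar_kind) : scal R k -> R :=
  match k return scal R k -> R with
  | RealK => fun x : R => `|x|
  | ComplexK => fun z : R[i] => complex.Re `|z|
  end.

Section Spaces.
Variables (R : realType) (k : scalar_kind) (p : R).
Variables (G : choiceType) (L : groupLaw G) (S : seq G).
Local Notation K := (scal R k).

Definition lp_sum (g : G -> K) : \bar R :=
  (\esum_(x in [set: G]) (sabs (g x) `^ p)%:E)%E.
Definition in_lp (g : G -> K) : Prop := (lp_sum g < +oo)%E.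
Definition lp_norm (g : G -> K) : \bar R := (lp_sum g `^ p^-1)%E.

Definition grad_sum (f : G -> K) : \bar R :=
  (\esum_(e in cayley_edges L S) ((sabs (f e.2 - f e.1)) `^ p)%:E)%E.
Definition in_Dp (f : G -> K) : Prop := (grad_sum f < +oo)%E.
Definition Dp_normp (f : G -> K) : \bar R :=
  (grad_sum f + ((sabs (f (gone L))) `^ p)%:E)%E.

(* [f] = 0 in the reduced l^p-cohomology: f lies in the D^p-closure of l^p(G) + K *)
Definition reduced_class_zero (f : G -> K) : Prop :=
  forall eps : R, 0 < eps ->
    exists (g : G -> K) (c : K), in_lp g /\
      (Dp_normp (fun x => (f x - g x - c)%R) < eps%:E)%E.

Definition fin_supp (xi : G -> K) : Prop := finite_set [set x | xi x != 0].
Definition total_mass (xi : G -> K) : K := \sum_(x \in [set: G]) xi x.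
Definition delta (a : G) : G -> K := fun x => if x == a then 1 else 0.
(* (xi * f)(eta) = sum_gamma xi(gamma) f(gamma^-1 eta), for finitely supported xi *)
Definition gconv (xi f : G -> K) : G -> K :=
  fun eta => \sum_(g \in [set: G]) (xi g * f (gmul L (ginv L g) eta)).
End Spaces.

Arguments delta {R k G} a _.
Arguments gconv {R k G} L xi f _.

From mathcomp Require Import all_boot all_algebra.
From mathcomp Require Import complex.
From mathcomp Require Import all_classical all_reals all_analysis.
From mathcomp Require Import ring lra.
Import order.Order.TTheory GRing.Theory Num.Theory.
Import numFieldNormedType.Exports.
Local Open Scope classical_set_scope.
Local Open Scope ring_scope.
Set Implicit Arguments. Unset Strict Implicit.

(* Put u_n = xi_n * f.  Since xi_n is finitely supported of mass one, f - u_n is a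
   finite combination of the functions f - f(g^-1 .), each of which lies in l^p
   because f has l^p gradient and S generates G.  The gradient of u_n along the
   edge (x, s^-1 x) is ((delta_s - delta_e) * xi_n * f)(x), so the gradients of the
   u_n are bounded in l^p(E) and tend to 0 pointwise.  For p > 1 such a sequence has
   Cesaro averages along a subsequence of arbitrarily small l^p norm (a
   Banach-Saks type argument): choose the subsequence so that each term is tiny on
   the finite set where the previous terms live and has a tiny tail outside a
   slightly larger finite set; then every edge carries one large term at most.
   The corresponding average F of the u_n satisfies f - F in l^p and
   ||grad F||_p small, which is what [f] = 0 means. *)

Section GroupLaw.
Variables (G : Type) (L : groupLaw G).
Local Notation m := (gmul L).
Local Notation i := (ginv L).
Local Notation e := (gone L).

Lemma gmulrV x : m x (i x) = e.
Proof.
rewrite -[m x (i x)](gmul1 L) -[in m e _](gmulV L (i x)).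
by rewrite -gmulA (gmulA L (i x)) gmulV (gmul1 L) gmulV.
Qed.

Lemma gmulr1 x : m x e = x.
Proof. by rewrite -(gmulV L x) gmulA gmulrV gmul1. Qed.

Lemma gmulKg x y : m (i x) (m x y) = y.
Proof. by rewrite gmulA gmulV gmul1. Qed.

Lemma gmulKVg x y : m x (m (i x) y) = y.
Proof. by rewrite gmulA gmulrV gmul1. Qed.

Lemma ginv_unique a b : m a b = e -> a = i b.
Proof. by move=> ab; rewrite -[a]gmulr1 -(gmulrV b) gmulA ab gmul1. Qed.

Lemma ginvM x y : i (m x y) = m (i y) (i x).
Proof.
symmetry; apply: ginv_unique.
by rewrite -gmulA (gmulA L (i x)) gmulV (gmul1 L) gmulV.
Qed.

Lemma ginvK x : i (i x) = x.
Proof. by symmetry; apply: ginv_unique; exact: gmulrV. Qed.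

Lemma ginv1 : i e = e.
Proof. by rewrite -[i e]gmulr1 gmulV. Qed.

Lemma gmulI x : injective (m x).
Proof. by move=> a b xab; rewrite -(gmulKg x a) xab gmulKg. Qed.
End GroupLaw.

Section AbsoluteValue.
Variables (R : realType) (k : scalar_kind).
Local Notation K := (scal R k).
Implicit Types x y : K.

Lemma sabs_ge0 x : 0 <= sabs x.
Proof.
case: k x => /= x; first exact: normr_ge0.
by case: x => a b /=; exact: sqrtr_ge0.
Qed.

Lemma sabsD x y : sabs (x + y) <= sabs x + sabs y.
Proof.
case: k x y => /= x y; first exact: ler_normD.
case: x y => a b [c d] /=; exact: (@le_normcD R (Complex a b) (Complex c d)).
Qed.

Lemma sabsM x y : sabs (x * y) = sabs x * sabs y.
Proof.
case: k x y => /= x y; first exact: normrM.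
case: x y => a b [c d] /=; exact: (@Normc.normcM R (Complex a b) (Complex c d)).
Qed.

Lemma sabsV x : sabs (x^-1) = (sabs x)^-1.
Proof.
case: k x => /= x; first exact: normfV.
case: x => a b /=; exact: (@Normc.normcV R (Complex a b)).
Qed.

Lemma sabsMn x n : sabs (x *+ n) = sabs x *+ n.
Proof.
case: k x => /= x; first exact: normrMn.
case: x => a b /=; exact: (@normcMn R (Complex a b)).
Qed.

Lemma sabs1 : sabs (1 : K) = 1.
Proof. by case: k => /=; [exact: normr1 | exact: (@Normc.normc1 R)]. Qed.

Lemma sabs_nat n : sabs (n%:R : K) = n%:R.
Proof. by rewrite sabsMn sabs1. Qed.

Lemma sabs0 : sabs (0 : K) = 0.
Proof. by rewrite -(mulr0n 1) sabsMn. Qed.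

Lemma sabs_sum (I : Type) (r : seq I) (F : I -> K) :
  sabs (\sum_(i <- r) F i) <= \sum_(i <- r) sabs (F i).
Proof.
elim: r => [|a r IH]; first by rewrite !big_nil sabs0.
by rewrite !big_cons; apply: (le_trans (sabsD _ _)); exact: lerD.
Qed.

Lemma sabs_avg_sub_le (I : Type) (r : seq I) (x y : I -> K) (c : I -> R) :
  (forall i, sabs (x i - y i) <= c i) ->
  sabs ((size r)%:R^-1 * \sum_(i <- r) x i - (size r)%:R^-1 * \sum_(i <- r) y i)
    <= (size r)%:R^-1 * \sum_(i <- r) c i.
Proof.
move=> xy; rewrite -mulrBr -sumrB sabsM sabsV sabs_nat.
apply: ler_wpM2l; first by rewrite invr_ge0.
by apply: (le_trans (sabs_sum _ _)); apply: ler_sum => i _.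
Qed.
End AbsoluteValue.

Lemma sumr_const_seq (V : nmodType) (T : Type) (s : seq T) (c : V) :
  \sum_(t <- s) c = c *+ size s.
Proof. by elim: s => [|x s IH]; rewrite ?big_nil ?big_cons ?IH ?mulrS. Qed.

Section PowerInequalities.
Variables (R : realType) (p : R).
Hypothesis p_gt0 : 0 < p.

Lemma powR0p : (0 : R) `^ p = 0.
Proof. by rewrite powR0 // gt_eqF. Qed.

Lemma ler_powR2 (a b : R) : 0 <= a -> a <= b -> a `^ p <= b `^ p.
Proof.
move=> a0 ab; apply: (ge0_ler_powR (ltW p_gt0)); rewrite ?nnegrE //.
exact: le_trans ab.
Qed.

Lemma powR_sum_le_size (I : Type) (s : seq I) (a : I -> R) : (forall i, 0 <= a i) ->
  (\sum_(i <- s) a i) `^ p <= (size s)%:R `^ p * \sum_(i <- s) a i `^ p.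
Proof.
move=> a0; pose mx (s : seq I) := \big[Num.max/0]_(i <- s) a i.
have mx_ge0 (t : seq I) : 0 <= mx t.
  by elim: t => [|x t IH]; rewrite /mx ?big_nil // big_cons le_max IH orbT.
have sum_le_mx : \sum_(i <- s) a i <= (size s)%:R * mx s.
  elim: s => [|x s IH]; first by rewrite /mx !big_nil mulr0.
  rewrite /mx !big_cons /= -addn1 natrD mulrDl mul1r addrC.
  apply: lerD; last by rewrite le_max lexx.
  by apply: (le_trans IH); apply: ler_wpM2l => //; rewrite le_max lexx orbT.
have mx_le_sum : mx s `^ p <= \sum_(i <- s) a i `^ p.
  elim: s {sum_le_mx} => [|x s IH]; first by rewrite /mx !big_nil powR0p.
  rewrite /mx !big_cons -/(mx s); apply: le_trans (lerD (lexx _) IH).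
  by case: (leP (a x) (mx s)) => _; [rewrite lerDr | rewrite lerDl]; exact: powR_ge0.
apply: (le_trans (ler_powR2 (sumr_ge0 _ (fun i _ => a0 i)) sum_le_mx)).
by rewrite powRM ?ler0n //; apply: ler_wpM2l mx_le_sum; exact: powR_ge0.
Qed.

Lemma powR_sum_le_single (I : eqType) (s : seq I) (a : I -> R) :
  uniq s -> (forall i, 0 <= a i) ->
  {in s &, forall i j, a i != 0 -> a j != 0 -> i = j} ->
  (\sum_(i <- s) a i) `^ p <= \sum_(i <- s) a i `^ p.
Proof.
elim: s => [|x s IH]; first by rewrite !big_nil powR0p.
move=> /= /andP[xs us] a0 single.
rewrite !big_cons; have [ax|ax] := eqVneq (a x) 0.
  rewrite ax add0r powR0p add0r; apply: IH => // i j si sj.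
  by apply: single; rewrite inE ?si ?sj orbT.
have -> : \sum_(i <- s) a i = 0.
  rewrite big_seq big1 // => i si; apply/eqP; apply: contraT => ai.
  by move: xs; rewrite (single x i (mem_head _ _) (mem_behead (s:=x::s) si) ax ai) si.
by rewrite addr0 lerDl; apply: sumr_ge0 => i _; exact: powR_ge0.
Qed.

Lemma powR_addr_le (u v : R) : 0 <= u -> 0 <= v ->
  (u + v) `^ p <= 2%:R `^ p * (u `^ p + v `^ p).
Proof.
move=> u0 v0.
have := @powR_sum_le_size bool [:: true; false] (fun b => if b then u else v).
by rewrite !big_cons !big_nil !addr0 /=; apply; case.
Qed.

Lemma powR_sum_split (I : eqType) (s : seq I) (P : pred I) (a : I -> R) :
  uniq s -> (forall i, 0 <= a i) -> {in s &, forall i j, P i -> P j -> i = j} ->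
  (\sum_(i <- s) a i) `^ p <=
    2%:R `^ p * (\sum_(i <- s) (if P i then a i `^ p else 0) +
                 (size s)%:R `^ p * \sum_(i <- s) (if P i then 0 else a i `^ p)).
Proof.
move=> us a0 single.
pose aP i := if P i then a i else 0; pose aN i := if P i then 0 else a i.
have aP0 i : 0 <= aP i by rewrite /aP; case: ifP.
have aN0 i : 0 <= aN i by rewrite /aN; case: ifP.
have -> : \sum_(i <- s) a i = \sum_(i <- s) aP i + \sum_(i <- s) aN i.
  rewrite -big_split /=; apply: eq_bigr => i _; rewrite /aP /aN.
  by case: (P i); rewrite ?addr0 ?add0r.
have sP0 : 0 <= \sum_(i <- s) aP i by apply: sumr_ge0.
have sN0 : 0 <= \sum_(i <- s) aN i by apply: sumr_ge0.
apply: (le_trans (powR_addr_le sP0 sN0)).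
apply: ler_wpM2l; first exact: powR_ge0.
apply: lerD.
  apply: (le_trans (powR_sum_le_single us aP0 _)).
    move=> i j si sj; rewrite /aP; case: ifP => [Pi|]; last by rewrite eqxx.
    by case: ifP => [Pj _ _|]; [exact: single | rewrite eqxx].
  by apply: ler_sum => i _; rewrite /aP; case: ifP; rewrite ?powR0p.
apply: (le_trans (powR_sum_le_size _ aN0)); apply: ler_wpM2l; first exact: powR_ge0.
by apply: ler_sum => i _; rewrite /aN; case: ifP; rewrite ?powR0p.
Qed.
End PowerInequalities.

Lemma fsbigT_seq (T : choiceType) (V : zmodType) (r : seq T) (F : T -> V) :
  uniq r -> (forall t, t \notin r -> F t = 0) ->
  \sum_(t \in [set: T]) F t = \sum_(t <- r) F t.
Proof.
move=> ur F0; rewrite (fsbig_seq _ _ ur) (fsbig_widen [set` r] setT) //.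
by move=> t [_ /= tr]; apply: F0; apply/negP.
Qed.

Section ExtendedSums.
Variables (R : realType) (T : choiceType).

Lemma esum_le_of_sums (D : set T) (phi : T -> R) (M : R) :
  (forall s : seq T, uniq s -> (forall t, t \in s -> D t) -> \sum_(t <- s) phi t <= M) ->
  (\esum_(t in D) (phi t)%:E <= M%:E)%E.
Proof.
move=> H; apply: ge_ereal_sup => _ [A [finA AD] <-].
rewrite (fsbig_fwiden (finmap.enum_fset (fset_set A)) A) //.
- rewrite sumEFin lee_fin; apply: H; first exact: finmap.fset_uniq.
  by move=> t; rewrite in_fset_set // inE => /AD.
- by move=> t At; rewrite /= in_fset_set // inE.
- by move=> t [/= tA []]; move: tA; rewrite in_fset_set // inE.
Qed.

Lemma sum_le_esum (D : set T) (phi : T -> R) (s : seq T) :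
  uniq s -> (forall t, t \in s -> D t) ->
  ((\sum_(t <- s) phi t)%:E <= \esum_(t in D) (phi t)%:E)%E.
Proof.
move=> us sD; apply: esum_ge; exists [set` s].
  by split; [exact: finite_seq | move=> t /= ts; apply: sD].
by rewrite -(fsbig_seq _ _ us) sumEFin.
Qed.
End ExtendedSums.

Section LpBounded.
Variables (R : realType) (k : scalar_kind) (G : choiceType) (p : R).
Hypothesis p_gt0 : 0 < p.
Local Notation K := (scal R k).

Definition lp_bounded (h : G -> K) := exists M : R, forall s : seq G, uniq s ->
  \sum_(t <- s) sabs (h t) `^ p <= M.

Lemma lp_bounded_ext (a b : G -> K) : lp_bounded a -> a =1 b -> lp_bounded b.
Proof. by move=> [M HM] ab; exists M => s us; under eq_bigr do rewrite -ab; apply: HM. Qed.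

Lemma lp_bounded0 : lp_bounded (fun _ => 0).
Proof. by exists 0 => s _; rewrite big1 // => t _; rewrite sabs0 powR0p. Qed.

Lemma lp_boundedD (a b : G -> K) : lp_bounded a -> lp_bounded b ->
  lp_bounded (fun t => a t + b t).
Proof.
move=> [Ma HMa] [Mb HMb]; exists (2%:R `^ p * (Ma + Mb)) => s us.
apply: (@le_trans _ _ (\sum_(t <- s) 2%:R `^ p * (sabs (a t) `^ p + sabs (b t) `^ p))).
  apply: ler_sum => t _; apply: le_trans _ (powR_addr_le p_gt0 (sabs_ge0 (a t)) (sabs_ge0 (b t))).
  by apply: ler_powR2 => //; [exact: sabs_ge0 | exact: sabsD].
rewrite -mulr_sumr big_split /=; apply: ler_wpM2l; first exact: powR_ge0.
exact: lerD (HMa s us) (HMb s us).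
Qed.

Lemma lp_boundedZ (c : K) (a : G -> K) : lp_bounded a -> lp_bounded (fun t => c * a t).
Proof.
move=> [Ma HMa]; exists (sabs c `^ p * Ma) => s us.
under eq_bigr do rewrite sabsM powRM ?sabs_ge0 //.
by rewrite -mulr_sumr; apply: ler_wpM2l; [exact: powR_ge0 | exact: HMa].
Qed.

Lemma lp_bounded_sum (I : eqType) (r : seq I) (c : I -> K) (h : I -> G -> K) :
  (forall i, i \in r -> lp_bounded (h i)) ->
  lp_bounded (fun t => \sum_(i <- r) c i * h i t).
Proof.
elim: r => [|i r IH] H.
  by apply: (lp_bounded_ext lp_bounded0) => t; rewrite big_nil.
apply: (lp_bounded_ext (lp_boundedD (lp_boundedZ (c i) (H i (mem_head _ _)))
                         (IH (fun j jr => H j (mem_behead (s := i :: r) jr))))).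
by move=> t /=; rewrite big_cons.
Qed.

Lemma lp_bounded_sub_avg (I : eqType) (r : seq I) (f : G -> K) (u : I -> G -> K) :
  (0 < size r)%N -> (forall i, i \in r -> lp_bounded (fun t => f t - u i t)) ->
  lp_bounded (fun t => f t - (size r)%:R^-1 * \sum_(i <- r) u i t).
Proof.
move=> r0 fu.
apply: (lp_bounded_ext (lp_bounded_sum (fun=> (size r)%:R^-1) (h := fun i t => f t - u i t) fu)).
move=> t /=; under eq_bigr do rewrite mulrBr.
rewrite sumrB [in RHS]mulr_sumr sumr_const_seq -mulrnAl -[X in X * f t]mulr_natr mulVf ?mul1r //.
by rewrite pnatr_eq0 -lt0n.
Qed.

Lemma lp_bounded_in_lp (h : G -> K) : lp_bounded h -> in_lp p h.
Proof.
move=> [M HM]; rewrite /in_lp /lp_sum.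
apply: le_lt_trans (ltry M); apply: esum_le_of_sums => s us _; exact: HM.
Qed.

Lemma lp_norm_sum_le (h : G -> K) (C : R) : (lp_norm p h < C%:E)%E ->
  forall s : seq G, uniq s -> \sum_(t <- s) sabs (h t) `^ p <= C `^ p.
Proof.
rewrite /lp_norm => hC s us.
have := @sum_le_esum R G setT (fun t => sabs (h t) `^ p) s us (fun _ _ => I).
have : (0 <= lp_sum p h)%E by apply: esum_ge0 => t _; rewrite lee_fin powR_ge0.
move: hC; rewrite /lp_sum.
case: (\esum_(x in [set: G]) (sabs (h x) `^ p)%:E)%E => [r| |] //.
- rewrite poweR_EFin !lee_fin lte_fin => hr r0 sum_le.
  apply: (le_trans sum_le).
  have -> : r = (r `^ p^-1) `^ p by rewrite -powRrM mulVf ?gt_eqF // powRr1.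
  by apply: ler_powR2 => //; [exact: powR_ge0 | exact: ltW].
- by rewrite poweRyr ?invr_eq0 ?gt_eqF.
Qed.
End LpBounded.

Section FiniteDifferences.
Variables (R : realType) (k : scalar_kind) (G : choiceType) (L : groupLaw G).
Variables (S : seq G) (p : R).
Hypothesis p_gt0 : 0 < p.
Local Notation K := (scal R k).
Local Notation m := (gmul L).
Local Notation i := (ginv L).
Variable f : G -> K.
Hypothesis f_Dp : in_Dp p L S f.

Lemma lp_bounded_transl (x : G) (h : G -> K) :
  lp_bounded p h -> lp_bounded p (fun t => h (m x t)).
Proof.
move=> [M HM]; exists M => s us.
rewrite -(big_map (m x) predT (fun u => sabs (h u) `^ p)).
by apply: HM; rewrite map_inj_uniq //; exact: gmulI.
Qed.

Lemma lp_bounded_grad (s : G) : s \in S -> lp_bounded p (fun t => f (m (i s) t) - f t).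
Proof.
move=> sS; have grad_ge0 : (0 <= grad_sum p L S f)%E.
  by apply: esum_ge0 => e _; rewrite lee_fin powR_ge0.
exists (fine (grad_sum p L S f)) => r ur.
rewrite -lee_fin fineK ?ge0_fin_numE //.
rewrite -(big_map (fun t => (t, m (i s) t)) predT (fun e => sabs (f e.2 - f e.1) `^ p)).
apply: sum_le_esum; first by rewrite map_inj_uniq // => a b [].
by move=> e /mapP [t _ ->]; exists s.
Qed.

Lemma lp_bounded_sub_word (w : seq G) : all (fun s => s \in S) w ->
  lp_bounded p (fun t => f t - f (m (i (foldr m (gone L) w)) t)).
Proof.
elim: w => [|s w IH] /=.
  by move=> _; apply: (lp_bounded_ext (lp_bounded0 k G p_gt0)) => t; rewrite ginv1 gmul1 subrr.
move=> /andP[sS wS].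
apply: (lp_bounded_ext (lp_boundedD p_gt0 (lp_boundedZ (-1) (lp_bounded_grad sS))
                                   (lp_bounded_transl (i s) (IH wS)))) => t /=.
by rewrite ginvM -gmulA; ring.
Qed.

Lemma lp_bounded_sub_transl : generates L S ->
  forall g, lp_bounded p (fun t => f t - f (m (i g) t)).
Proof. by move=> gen g; have [w [wS ->]] := gen g; exact: lp_bounded_sub_word. Qed.
End FiniteDifferences.

Lemma sum_mem_le_small (R : numFieldType) (T : eqType) (v : T -> R) (A Y : seq T) (d : R) :
  0 <= d -> uniq Y -> (forall t, t \in A -> v t <= d / (size A).+1%:R) ->
  \sum_(t <- Y | t \in A) v t <= d.
Proof.
move=> d0 uY vA; rewrite -big_filter.
apply: (@le_trans _ _ (\sum_(t <- [seq t <- Y | t \in A]) (d / (size A).+1%:R))).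
  rewrite big_seq [X in _ <= X]big_seq; apply: ler_sum => t.
  by rewrite mem_filter => /andP[tA _]; exact: vA.
have size_le : (size [seq t <- Y | t \in A] <= size A)%N.
  apply: uniq_leq_size; first exact: filter_uniq.
  by move=> t; rewrite mem_filter => /andP[].
rewrite sumr_const_seq -[_ *+ size _]mulr_natr -mulrA -[X in _ <= X]mulr1.
apply: ler_wpM2l => //.
by rewrite mulrC ler_pdivrMr ?ltr0Sn // mul1r ler_nat; exact: leqW.
Qed.

Section Averaging.
Variables (R : realType) (p : R).
Hypothesis p_gt0 : 0 < p.
Variables (T : eqType) (w : nat -> T -> R) (M : R).
Hypothesis w_ge0 : forall n t, 0 <= w n t.
Hypothesis w_bounded : forall n (s : seq T), uniq s -> \sum_(t <- s) w n t `^ p <= M.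
Hypothesis w_cvg0 : forall t, (fun n => w n t) @ \oo --> (0 : R).

Lemma lp_tail_small n d : 0 < d -> exists B : seq T, forall Y, uniq Y ->
  (forall t, t \in Y -> t \notin B) -> \sum_(t <- Y) w n t `^ p <= d.
Proof.
move=> d0.
pose E := [set x : R | exists s : seq T, uniq s /\ x = \sum_(t <- s) w n t `^ p].
have hE : has_sup E.
  split; first by exists 0, [::]; rewrite big_nil.
  by exists M => x [s [us ->]]; apply: w_bounded.
have [x [B [uB ->]] near_sup] := sup_adherent d0 hE.
exists B => Y uY YB.
have uYB : uniq (Y ++ B).
  rewrite cat_uniq uY uB andbT /=; apply/hasPn => t tB; apply/negP => tY.
  by move: (YB t tY); rewrite tB.
have : \sum_(t <- Y ++ B) w n t `^ p <= sup E.
  by apply: sup_upper_bound => //; exists (Y ++ B).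
by rewrite big_cat /=; move: near_sup; lra.
Qed.

Lemma eventually_small_on (X : seq T) th : 0 < th ->
  exists n, forall t, t \in X -> w n t `^ p <= th.
Proof.
move=> th0; pose eta := th `^ p^-1.
have eta0 : 0 < eta by apply: powR_gt0.
have [N0 H] : exists N0, forall n, (N0 <= n)%N -> forall t, t \in X -> w n t < eta.
  elim: X => [|x X [N1 H1]]; first by exists 0%N.
  have [N2 _ H2] := (cvgrPdist_lt _ _).1 (w_cvg0 x) eta eta0.
  exists (maxn N1 N2) => n; rewrite geq_max => /andP[n1 n2] t.
  rewrite inE => /orP[/eqP ->|tX]; last exact: H1.
  by have := H2 n n2; rewrite /= sub0r normrN; apply: le_lt_trans; exact: ler_norm.
exists N0 => t tX.
have -> : th = eta `^ p by rewrite /eta -powRrM mulVf ?gt_eqF // powRr1 // ltW.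
by apply: ler_powR2 => //; apply: ltW; exact: H.
Qed.

(* A point lying in A (j+1) but not in A j is where the j-th term may be large;
   every point has at most one such index since the A j increase. *)
Lemma sum_powR_subseq_le (A : nat -> seq T) (nk : nat -> nat) (d : R) (N : nat) :
  0 <= d ->
  (forall j l t, (j <= l)%N -> t \in A j -> t \in A l) ->
  (forall j t, t \in A j -> w (nk j) t `^ p <= d / (size (A j)).+1%:R) ->
  (forall j Y, uniq Y -> (forall t, t \in Y -> t \notin A j.+1) ->
      \sum_(t <- Y) w (nk j) t `^ p <= d) ->
  forall Y, uniq Y ->
  \sum_(t <- Y) (\sum_(j <- iota 0 N) w (nk j) t) `^ p <=
    2%:R `^ p * (N%:R * M + N%:R `^ p * (N%:R * (d + d))).
Proof.
move=> d0 A_mono w_small w_tail Y uY.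
pose fresh j t := (t \in A j.+1) && (t \notin A j).
have fresh_unique t : {in iota 0 N &, forall i j, fresh i t -> fresh j t -> i = j}.
  move=> i j _ _ /andP[ti1 ti] /andP[tj1 tj]; apply/eqP; apply: contraT => ij.
  case: (ltngtP i j) ij => // [ltij|ltji] _.
    by move: tj; rewrite (A_mono i.+1 j t ltij ti1).
  by move: ti; rewrite (A_mono j.+1 i t ltji tj1).
apply: (le_trans (ler_sum _ (fun t _ => powR_sum_split p_gt0 (P := fresh^~ t)
  (iota_uniq 0 N) (fun j => w_ge0 (nk j) t) (@fresh_unique t)))).
rewrite size_iota -mulr_sumr; apply: ler_wpM2l; first exact: powR_ge0.
rewrite big_split /= -mulr_sumr; apply: lerD.
  rewrite exchange_big /=.
  apply: (@le_trans _ _ (\sum_(j <- iota 0 N) M)).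
    apply: ler_sum => j _; apply: le_trans (w_bounded (nk j) uY).
    by apply: ler_sum => t _; case: ifP => _ //; exact: powR_ge0.
  by rewrite sumr_const_seq size_iota mulr_natl.
apply: ler_wpM2l; first exact: powR_ge0.
rewrite exchange_big /=.
apply: (@le_trans _ _ (\sum_(j <- iota 0 N) (d + d))); last first.
  by rewrite sumr_const_seq size_iota mulr_natl.
apply: ler_sum => j _.
apply: (@le_trans _ _ (\sum_(t <- Y) ((if t \in A j then w (nk j) t `^ p else 0) +
                        (if t \notin A j.+1 then w (nk j) t `^ p else 0)))).
  apply: ler_sum => t _; rewrite /fresh.
  case: (t \in A j.+1); case: (t \in A j) => /=; rewrite ?addr0 ?add0r //.
  by rewrite lerDl powR_ge0.
rewrite big_split /= -!big_mkcond /=; apply: lerD; first exact: sum_mem_le_small (w_small j).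
rewrite -big_filter; apply: w_tail; first exact: filter_uniq.
by move=> t; rewrite mem_filter => /andP[].
Qed.

Lemma exists_subseq_sum_bound (d : R) (N : nat) : 0 < d ->
  exists nk : nat -> nat, forall Y, uniq Y ->
  \sum_(t <- Y) (\sum_(j <- iota 0 N) w (nk j) t) `^ p <=
    2%:R `^ p * (N%:R * M + N%:R `^ p * (N%:R * (d + d))).
Proof.
move=> d0.
have step (X : seq T) : exists nB : nat * seq T,
    (forall t, t \in X -> w nB.1 t `^ p <= d / (size X).+1%:R) /\
    (forall Y, uniq Y -> (forall t, t \in Y -> t \notin nB.2) ->
       \sum_(t <- Y) w nB.1 t `^ p <= d).
  have [n Hn] := eventually_small_on X (divr_gt0 d0 (ltr0Sn R (size X))).
  by have [B HB] := lp_tail_small n d0; exists (n, B).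
have [F HF] := choice step.
pose A j := iter j (fun X => X ++ (F X).2) [::].
exists (fun j => (F (A j)).1).
apply: sum_powR_subseq_le (ltW d0) _ (fun j => (HF (A j)).1) _.
  move=> j l t; elim: l => [|l IH]; first by rewrite leqn0 => /eqP ->.
  rewrite leq_eqVlt => /orP[/eqP -> //|jl] tj.
  by rewrite /A iterS mem_cat -/(A l) (IH jl tj).
move=> j Y uY YA; apply: (HF (A j)).2 => // t tY.
by have := YA t tY; rewrite /A iterS mem_cat negb_or => /andP[].
Qed.

(* Divided by N^p, the bound of exists_subseq_sum_bound is
   2^p (M / N^(p-1) + 2 N d): take N^(p-1) >= 2^(p+1) M / eps and d = eps / (4 2^p N). *)
Lemma lp_bounded_null_avg_small (eps : R) : 1 < p -> 0 < eps ->
  exists N : nat, (0 < N)%N /\ exists nk : nat -> nat, forall Y, uniq Y ->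
  \sum_(t <- Y) ((size (iota 0 N))%:R^-1 * \sum_(j <- iota 0 N) w (nk j) t) `^ p <= eps.
Proof.
move=> p_gt1 e0.
have M0 : 0 <= M by have := w_bounded 0 (s:=[::]) isT; rewrite big_nil.
pose c2 : R := 2%:R `^ p.
have c20 : 0 < c2 by apply: powR_gt0.
pose q := p - 1.
have q0 : 0 < q by rewrite subr_gt0.
pose C0 := 2 * c2 * M / eps.
have C00 : 0 <= C0 by rewrite /C0 divr_ge0 // ?mulr_ge0 // ltW.
pose N := (Num.Def.archi_bound (C0 `^ q^-1)).+1.
have Nq : C0 <= N%:R `^ q.
  have -> : C0 = (C0 `^ q^-1) `^ q by rewrite -powRrM mulVf ?gt_eqF // powRr1.
  apply: (ge0_ler_powR (ltW q0)); rewrite ?nnegrE //; first exact: powR_ge0.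
  rewrite /N -addn1 natrD; apply: ler_wpDr => //; apply: ltW.
  by apply: archi_boundP; exact: powR_ge0.
have N0r : 0 < N%:R :> R by rewrite ltr0n.
pose d := eps / (4 * c2 * N%:R).
have d0 : 0 < d by rewrite /d divr_gt0 // !mulr_gt0.
have [nk Hnk] := exists_subseq_sum_bound N d0.
exists N; split => //; exists nk => Y uY; rewrite size_iota.
pose b := (N%:R^-1) `^ p.
have b0 : 0 <= b by apply: powR_ge0.
rewrite (eq_bigr (fun t => b * (\sum_(j <- iota 0 N) w (nk j) t) `^ p)); last first.
  move=> t _; rewrite powRM ?invr_ge0 ?(ltW N0r) //.
  by apply: sumr_ge0 => j _; apply: w_ge0.
rewrite -mulr_sumr; apply: (le_trans (ler_wpM2l b0 (Hnk Y uY))).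
have hb : b * (N%:R * N%:R `^ q) = 1.
  by rewrite mulr_powRB1 // -powRM ?invr_ge0 ?ltW // mulVf ?gt_eqF // powR1.
have hC : 2 * c2 * M <= eps * N%:R `^ q.
  by move: Nq; rewrite /C0 ler_pdivrMr // [X in _ <= X]mulrC.
have hd : d * (4 * c2 * N%:R) = eps by rewrite /d mulfVK // gt_eqF // !mulr_gt0.
rewrite -[N%:R `^ p]mulr_powRB1 ?ler0n // -/q -/c2.
set Nq' := N%:R `^ q in hb hC hd *; set Nr := N%:R in hb hC hd N0r *.
have key : b * Nr * (2 * c2 * M) <= eps.
  apply: (le_trans (ler_wpM2l _ hC)); first by apply: mulr_ge0 => //; apply: ltW.
  have -> : b * Nr * (eps * Nq') = eps * (b * (Nr * Nq')) by ring.
  by rewrite hb mulr1.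
have -> : b * (c2 * (Nr * M + Nr * Nq' * (Nr * (d + d)))) =
   (b * Nr * (2 * c2 * M)) / 2 + (d * (4 * c2 * Nr)) / 2 * (b * (Nr * Nq')) by field.
by rewrite hb hd; lra.
Qed.
End Averaging.

Section Convolution.
Variables (R : realType) (k : scalar_kind) (G : choiceType) (L : groupLaw G).
Local Notation K := (scal R k).
Local Notation m := (gmul L).
Local Notation i := (ginv L).
Local Notation e := (gone L).

Lemma fin_supp_seq (xi : G -> K) : fin_supp xi ->
  exists r : seq G, uniq r /\ forall g, g \notin r -> xi g = 0.
Proof.
move=> fs; exists (finmap.enum_fset (fset_set [set x | xi x != 0])).
split; first exact: finmap.fset_uniq.
move=> g; rewrite in_fset_set // notin_setE /= => h.
by apply/eqP; apply: contrapT => h'; apply: h; apply/negP.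
Qed.

Lemma gconv_seq (xi f : G -> K) (r : seq G) :
  uniq r -> (forall g, g \notin r -> xi g = 0) ->
  forall eta, gconv L xi f eta = \sum_(g <- r) xi g * f (m (i g) eta).
Proof. by move=> ur h eta; rewrite /gconv (fsbigT_seq ur) // => g gr; rewrite h // mul0r. Qed.

Lemma total_mass_seq (xi : G -> K) (r : seq G) :
  uniq r -> (forall g, g \notin r -> xi g = 0) -> total_mass xi = \sum_(g <- r) xi g.
Proof. by move=> ur h; rewrite /total_mass (fsbigT_seq ur). Qed.

Lemma gconv_delta_sub (s : G) (xi : G -> K) gam :
  gconv L (fun x => delta s x - delta e x) xi gam = xi (m (i s) gam) - xi gam.
Proof.
rewrite /gconv (fsbigT_seq (undup_uniq [:: s; e])); last first.
  move=> x; rewrite mem_undup !inE negb_or => /andP[xs xe].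
  by rewrite /delta (negbTE xs) (negbTE xe) subrr mul0r.
have [->|se] := eqVneq s e.
  by rewrite /= inE eqxx /= big_seq1 subrr mul0r ginv1 (gmul1 L) subrr.
rewrite /= mem_seq1 (negbTE se) big_cons big_seq1 /delta eqxx (negbTE se).
by rewrite eq_sym (negbTE se) eqxx ginv1 (gmul1 L) !subr0 sub0r mul1r mulN1r.
Qed.

Lemma gconv_delta_sub_conv (s : G) (xi f : G -> K) eta : fin_supp xi ->
  gconv L (gconv L (fun x => delta s x - delta e x) xi) f eta =
  gconv L xi f (m (i s) eta) - gconv L xi f eta.
Proof.
move=> fs; have [r [ur hr]] := fin_supp_seq fs.
pose z := undup (map (m s) r ++ r).
have uz : uniq z := undup_uniq _.
rewrite (gconv_seq _ uz); last first.
  move=> g; rewrite mem_undup mem_cat negb_or => /andP[g1 g2].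
  rewrite gconv_delta_sub (hr g g2) subr0; apply: hr; apply: contra g1 => h.
  by apply/mapP; exists (m (i s) g) => //; rewrite gmulKVg.
under eq_bigr do rewrite gconv_delta_sub mulrBl.
rewrite sumrB [gconv L xi f eta](gconv_seq _ uz); last first.
  by move=> g; rewrite mem_undup mem_cat negb_or => /andP[_]; exact: hr.
congr (_ - _).
have uz' : uniq (map (m (i s)) z) by rewrite map_inj_uniq //; exact: gmulI.
rewrite (gconv_seq _ uz'); last first.
  move=> g gz; apply: hr; apply: contra gz => gr.
  apply/mapP; exists (m s g); last by rewrite gmulKg.
  by rewrite mem_undup mem_cat; apply/orP; left; apply/mapP; exists g.
by rewrite big_map; apply: eq_bigr => g _; rewrite ginvM -gmulA ginvK gmulKVg.
Qed.

Lemma lp_bounded_sub_gconv (S : seq G) (p : R) (f xi : G -> K) :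
  0 < p -> generates L S -> in_Dp p L S f -> fin_supp xi -> total_mass xi = 1 ->
  lp_bounded p (fun t => f t - gconv L xi f t).
Proof.
move=> p0 gen fD fs mass1; have [r [ur hr]] := fin_supp_seq fs.
apply: (lp_bounded_ext (lp_bounded_sum p0 (r := r) xi
                           (fun g _ => lp_bounded_sub_transl p0 fD gen g))).
move=> t /=; rewrite (gconv_seq _ ur hr).
under eq_bigr do rewrite mulrBr.
by rewrite sumrB -mulr_suml -(total_mass_seq ur hr) mass1 mul1r.
Qed.
End Convolution.

Lemma cvg_sum_seq0 (R : realType) (I : eqType) (r : seq I) (F : nat -> I -> R) :
  (forall i, i \in r -> (fun n => F n i) @ \oo --> (0 : R)) ->
  (fun n => \sum_(i <- r) F n i) @ \oo --> (0 : R).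
Proof.
elim: r => [|i r IH] F_cvg.
  by under eq_fun do rewrite big_nil; exact: cvg_cst.
under eq_fun do rewrite big_cons.
have := cvgD (F_cvg i (mem_head _ _)) (IH (fun j jr => F_cvg j (mem_behead (s := i :: r) jr))).
by rewrite addr0 => sum_cvg; exact: sum_cvg.
Qed.

Section Gradients.
Variables (R : realType) (k : scalar_kind) (G : choiceType) (L : groupLaw G).
Variables (S : seq G) (p : R).
Hypothesis p_gt0 : 0 < p.
Local Notation K := (scal R k).
Local Notation m := (gmul L).
Local Notation i := (ginv L).

Lemma grad_sum_le (F : G -> K) (W : G * G -> R) (B : R) :
  (forall e, cayley_edges L S e -> sabs (F e.2 - F e.1) <= W e) ->
  (forall Y, uniq Y -> \sum_(e <- Y) W e `^ p <= B) ->
  (grad_sum p L S F <= B%:E)%E.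
Proof.
move=> FW WB; apply: esum_le_of_sums => Y uY YE; apply: le_trans (WB Y uY).
rewrite big_seq [X in _ <= X]big_seq; apply: ler_sum => e eY.
by apply: ler_powR2 => //; [exact: sabs_ge0 | exact: FW (YE e eY)].
Qed.

Lemma reduced_class_zero_of_grad (f : G -> K) :
  (forall eps, 0 < eps -> exists F : G -> K,
     lp_bounded p (fun t => f t - F t) /\ (grad_sum p L S F <= eps%:E)%E) ->
  reduced_class_zero p L S f.
Proof.
move=> small eps eps0; have [F [fF gradF]] := small (eps / 2) (divr_gt0 eps0 (ltr0Sn R 1)).
exists (fun t => f t - F t), (F (gone L)); split; first exact: lp_bounded_in_lp.
rewrite /Dp_normp (_ : f (gone L) - (f (gone L) - F (gone L)) - F (gone L) = 0); last by ring.
rewrite sabs0 powR0p // adde0.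
have -> : grad_sum p L S (fun t => f t - (f t - F t) - F (gone L)) = grad_sum p L S F.
  by apply: eq_esum => e _; congr ((sabs _ `^ p)%:E); ring.
by apply: le_lt_trans gradF _; rewrite lte_fin ltr_pdivrMr // ltr_pMr // ltr1n.
Qed.

Definition edge_weight (a : G -> G -> K) (e : G * G) : R :=
  \sum_(s <- S) if m (i s) e.1 == e.2 then sabs (a s e.1) else 0.

Lemma edge_weight_ge0 a e : 0 <= edge_weight a e.
Proof. by apply: sumr_ge0 => s _; case: ifP => _ //; exact: sabs_ge0. Qed.

Lemma grad_le_edge_weight (u : G -> K) (a : G -> G -> K) e :
  (forall s x, s \in S -> a s x = u (m (i s) x) - u x) ->
  cayley_edges L S e -> sabs (u e.2 - u e.1) <= edge_weight a e.
Proof.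
move=> au [s sS se]; rewrite /edge_weight (big_rem s sS) /= se eqxx -se -au //.
by rewrite lerDl; apply: sumr_ge0 => t _; case: ifP => _ //; exact: sabs_ge0.
Qed.

Lemma edge_weight_cvg0 (a : nat -> G -> G -> K) :
  (forall s, s \in S -> forall x, (fun n => sabs (a n s x)) @ \oo --> (0 : R)) ->
  forall e, (fun n => edge_weight (a n) e) @ \oo --> (0 : R).
Proof.
move=> a_cvg e; apply: cvg_sum_seq0 => s sS.
by case: (m (i s) e.1 == e.2); [exact: a_cvg | exact: cvg_cst].
Qed.

Lemma edge_weight_sum_le (a : G -> G -> K) (C : R) :
  (forall s, s \in S -> (lp_norm p (a s) < C%:E)%E) ->
  forall Y : seq (G * G), uniq Y ->
  \sum_(e <- Y) edge_weight a e `^ p <= (size S)%:R `^ p * ((size S)%:R * C `^ p).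
Proof.
move=> aC Y uY.
pose at_s s (e : G * G) := if m (i s) e.1 == e.2 then sabs (a s e.1) `^ p else 0.
apply: (@le_trans _ _ (\sum_(e <- Y) (size S)%:R `^ p * \sum_(s <- S) at_s s e)).
  apply: ler_sum => e _; apply: (le_trans (powR_sum_le_size p_gt0 _ _)).
    by move=> s; case: ifP => _ //; exact: sabs_ge0.
  apply: ler_wpM2l; first exact: powR_ge0.
  by apply: ler_sum => s _; rewrite /at_s; case: ifP; rewrite ?powR0p.
rewrite -mulr_sumr exchange_big /=; apply: ler_wpM2l; first exact: powR_ge0.
rewrite -[X in _ <= X * _]sumr_const_seq mulr_suml.
rewrite big_seq [X in _ <= X]big_seq; apply: ler_sum => s sS; rewrite mul1r.
rewrite /at_s -big_mkcond /= -big_filter.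
rewrite -(big_map fst predT (fun x => sabs (a s x) `^ p)).
apply: (lp_norm_sum_le p_gt0 (aC s sS)).
rewrite map_inj_in_uniq ?filter_uniq //.
move=> [x1 y1] [x2 y2]; rewrite !mem_filter /= => /andP[/eqP <- _] /andP[/eqP <- _] ->.
by [].
Qed.
End Gradients.

Theorem lemma3p1 (R : realType) (k : scalar_kind) (G : choiceType) (L : groupLaw G)
  (S : seq G) (p : R) (f : G -> scal R k) (xi : nat -> G -> scal R k) :
  symmetric_set L S -> generates L S -> 1 < p ->
  in_Dp p L S f ->
  (forall n, fin_supp (xi n)) ->
  (forall n, total_mass (xi n) = 1) ->
  (forall s, s \in S -> forall eta : G,
     (fun n => sabs (gconv L (gconv L (fun x => (delta s x - delta (gone L) x)%R) (xi n)) f eta))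
       @ \oo --> (0 : R)) ->
  (exists2 K : R, 0 < K & forall s, s \in S -> forall n,
     (lp_norm p (gconv L (gconv L (fun x => (delta s x - delta (gone L) x)%R) (xi n)) f)
       < K%:E)%E) ->
  reduced_class_zero p L S f.
Proof.
move=> _ gen p_gt1 f_Dp xi_fin xi_mass a_cvg [C _ a_bounded].
have p_gt0 : 0 < p := lt_trans ltr01 p_gt1.
pose a n s := gconv L (gconv L (fun x => delta s x - delta (gone L) x) (xi n)) f.
pose u n := gconv L (xi n) f.
have a_grad n s x : s \in S -> a n s x = u n (gmul L (ginv L s) x) - u n x.
  by move=> _; exact: gconv_delta_sub_conv.
apply: reduced_class_zero_of_grad => // eps eps0.
have [N [N0 [nk avg_small]]] := lp_bounded_null_avg_small p_gt0
  (fun n => edge_weight_ge0 L S (a n)) (fun n => edge_weight_sum_le L p_gt0 (fun s sS => a_bounded s sS n))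
  (edge_weight_cvg0 L (a := a) a_cvg) p_gt1 eps0.
exists (fun t => (size (iota 0 N))%:R^-1 * \sum_(j <- iota 0 N) u (nk j) t); split.
  apply: (lp_bounded_sub_avg p_gt0) => [|j _]; first by rewrite size_iota.
  exact: lp_bounded_sub_gconv.
apply: (grad_sum_le p_gt0 _ avg_small) => e edge.
by apply: sabs_avg_sub_le => j; apply: grad_le_edge_weight (a_grad (nk j)) edge.
Qed.
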